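(* Let $N$ be a semi-directed network on leaf set $X$ with $|X|\ge4$. If $\{x,y,z,w\}\subseteq X$ (four distinct leaves), then $$\widetilde\rho_{xy}(N|_{xyzw})=\frac{1}{\mu(N)}\sum_{T\in\mathcal T(N)}\mu(T,N)\cdot\rho_{xy}(T|_{xyzw}).$$
   Context: A (binary) rooted phylogenetic network on $X$ is a rooted DAG whose root has in-degree 0, out-degree 2, whose leaves (in-degree 1, out-degree 0) are bijectively labeled by $X$, and whose other nodes have (in,out)-degree $(1,2)$ or $(2,1)$ (hybrid nodes), the root being the least stable ancestor of $X$. Edges into hybrid nodes are hybrid edges. A semi-directed network is obtained by undirecting all non-hybrid edges and suppressing the root. A phylogenetic tree is a semi-directed network without hybrid nodes. $T$ is displayed by $N$ if obtained by deleting exactly one hybrid edge per hybrid node, then repeatedly deleting unlabeled leaves and suppressing degree-2 nodes; $\mathcal T(N)$ is the set of displayed trees; the multiplicity $\mu(T,N)$ is the number of choices of deleted hybrid edges yielding $T$, and $\mu(N)=\sum_{T\in\mathcal T(N)}\mu(T,N)=2^r$, $r$ the number of hybrid nodes. For $Y\subseteq X$, $|Y|\ge2$, $N|_Y$ is the union of all up-down paths between leaves of $Y$ (paths that from one end first go only against edge directions and then only along them, undirected edges usable both ways), with degree-2 nodes exhaustively suppressed; $N|_{xyzw}=N|_{\{x,y,z,w\}}$, and for trees this is the induced subtree. For a quartet tree $T$ on $\{x,y,z,w\}$, $\rho_{xy}(T)=0$ if $T$ has split $\{x,y\}|\{z,w\}$, else $1$. For a semi-directed network $M$ on four leaves, $\widetilde\rho_{xy}(M)=\frac1{\mu(M)}\sum_{T\in\mathcal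 T(M)}\mu(T,M)\rho_{xy}(T)$. *)

From HB Require Import structures.
From mathcomp Require Import all_boot all_order all_algebra.
From mathcomp Require Import boolp.

Unset Printing Implicit Defensive.
Import GRing.Theory Num.Theory.
Local Open Scope ring_scope.

Section Networks.
Variable V : finType.

Definition indeg (R : seq (V * V)) (v : V) : nat := count (fun e => e.2 == v) R.
Definition outdeg (R : seq (V * V)) (v : V) : nat := count (fun e => e.1 == v) R.
Definition arc (R : seq (V * V)) : rel V := fun u v => (u, v) \in R.

Definition arc_avoid (R : seq (V * V)) (v : V) : rel V :=
  fun a b => [&& arc R a b, a != v & b != v].

Definition is_rooted_network (X : finType) (R : seq (V * V)) (r : V)
    (lab : X -> V) : Prop :=
  [/\ uniq R /\
      (forall u v, (u, v) \in R -> ~~ connect (arc R) v u),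
      indeg R r = 0%N /\ outdeg R r = 2%N,
      (forall v, v != r ->
         [|| (indeg R v == 1%N) && (outdeg R v == 0%N),
             (indeg R v == 1%N) && (outdeg R v == 2%N)
           | (indeg R v == 2%N) && (outdeg R v == 1%N)]),
      (injective lab /\
       forall v, (indeg R v == 1%N) && (outdeg R v == 0%N) <-> exists x, lab x = v)
      (* the root is the least stable ancestor of X: no other vertex lies on
         all root-to-leaf paths *)
    & forall v, v != r -> exists x, connect (arc_avoid R v) r (lab x)].

(* Mixed multigraphs: an edge (u, v, d) is a directed (hybrid) edge    *)
(* u -> v if d = true, and an undirected edge {u, v} if d = false.     *)

Definition medge := (V * V * bool)%type.

Definition edge_at (G : seq medge) (i : 'I_(size G)) : medge := tnth (in_tuple G) i.


(* The semi-directed network of a rooted network: undirect non-hybrid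
   arcs, suppress the root (its two incident edges are merged into one
   edge between its two children).  The root stays as an isolated
   vertex of type V, which is irrelevant for all notions below. *)
Definition sd_net (R : seq (V * V)) (r : V) : seq medge :=
  let hyb v := indeg R v == 2%N in
  let kids := [seq e.2 | e <- R & e.1 == r] in
  let c1 := nth r kids 0 in
  let c2 := nth r kids 1 in
  let merged : medge :=
    if hyb c2 then (c1, c2, true)
    else if hyb c1 then (c2, c1, true) else (c1, c2, false) in
  rcons [seq (e.1, e.2, hyb e.2) | e <- R & e.1 != r] merged.

Definition hybrid_node (G : seq medge) (v : V) : bool :=
  count (fun e : medge => e.2 && (e.1.2 == v)) G == 2%N.

Definition valid_del (G : seq medge) (D : {set 'I_(size G)}) : bool :=
  [forall i : 'I_(size G),
     (i \in D) ==> ((edge_at G i).2 && hybrid_node G (edge_at G i).1.2)]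
  && [forall v : V, hybrid_node G v ==>
        (#|[set i in D | (edge_at G i).1.2 == v]| == 1%N)].

(* mu(G) = number of choices of deleted hybrid edges
   ( = sum over displayed trees T of mu(T, G) ) *)
Definition mu (G : seq medge) : nat :=
  #|[set D : {set 'I_(size G)} | valid_del G D]|.

(* The (unpruned, unsuppressed) displayed tree obtained by deleting the
   edges of D; all remaining edges become undirected. *)
Definition display (G : seq medge) (D : {set 'I_(size G)}) : seq medge :=
  [seq ((edge_at G i).1.1, (edge_at G i).1.2, false)
  | i <- enum 'I_(size G) & i \notin D].

Definition incident (e : medge) (u v : V) : bool :=
  ((e.1.1 == u) && (e.1.2 == v)) || ((e.1.1 == v) && (e.1.2 == u)).
Definition step_down (e : medge) (u : V) : bool := e.2 && (e.1.1 == u).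
Definition step_up (e : medge) (u : V) : bool := e.2 && (e.1.2 == u).

(* A simple path a = v_0, v_1, ..., v_k = b (p = [v_1;...;v_k]) using the
   edges es (es_j joins v_j and v_(j+1)), which first only goes against
   edge directions and then only along them (undirected edges usable
   either way): no "down" step is followed by an "up" step. *)
Definition updown_path (G : seq medge) (a b : V) (p : seq V)
    (es : seq 'I_(size G)) : Prop :=
  let ee := map (edge_at G) es in
  let e0 : medge := (a, a, false) in
  [/\ uniq (a :: p), last a p = b, size es = size p,
      (forall j, (j < size p)%N ->
          incident (nth e0 ee j) (nth a (a :: p) j) (nth a p j))
    & (forall j k, (j < k < size p)%N ->
          ~~ (step_down (nth e0 ee j) (nth a (a :: p) j)
              && step_up (nth e0 ee k) (nth a (a :: p) k)))].

Definition on_updown (G : seq medge) (Y : seq V) (i : 'I_(size G)) : Prop :=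
  exists a b p es, [/\ a \in Y, b \in Y, a != b, updown_path G a b p es & i \in es].

(* G|_Y : union of all up-down paths between leaves of Y (degree-2 nodes
   are not suppressed) *)
Definition restrict (G : seq medge) (Y : seq V) : seq medge :=
  [seq edge_at G i | i <- enum 'I_(size G) & `[< on_updown G Y i >]].

Definition adj (G : seq medge) : rel V := fun u v => has (fun e => incident e u v) G.

Definition drop_edge (G : seq medge) (i : 'I_(size G)) : seq medge :=
  [seq edge_at G j | j <- enum 'I_(size G) & j != i].

Definition has_split (T : seq medge) (a b c d : V) : bool :=
  [exists i : 'I_(size T),
     [&& connect (adj (drop_edge T i)) a b,
         connect (adj (drop_edge T i)) c d
       & ~~ connect (adj (drop_edge T i)) a c]].

Definition rho (T : seq medge) (a b c d : V) : rat :=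
  if has_split T a b c d then 0 else 1.

(* rho~_xy(M) = 1/mu(M) * sum_T mu(T,M) rho_xy(T)
              = 1/mu(M) * sum over choices D of rho_xy(T_D) *)
Definition rho_tilde (M : seq medge) (a b c d : V) : rat :=
  (mu M)%:R^-1 *
  \sum_(D : {set 'I_(size M)} | valid_del M D) rho (display M D) a b c d.

End Networks.

Arguments indeg {V} R v.
Arguments outdeg {V} R v.
Arguments arc {V} R.
Arguments arc_avoid {V} R v.
Arguments is_rooted_network {V X} R r lab.
Arguments medge V : clear implicits.
Arguments edge_at {V} G i.
Arguments sd_net {V} R r.
Arguments hybrid_node {V} G v.
Arguments valid_del {V} G D.
Arguments mu {V} G.
Arguments display {V} G D.
Arguments incident {V} e u v.
Arguments step_down {V} e u.
Arguments step_up {V} e u.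
Arguments updown_path {V} G a b p es.
Arguments on_updown {V} G Y i.
Arguments restrict {V} G Y.
Arguments adj {V} G.
Arguments drop_edge {V} G i.
Arguments has_split {V} T a b c d.
Arguments rho {V} T a b c d.
Arguments rho_tilde {V} M a b c d.

(* Let M = N|_Q and, for a set D of deleted hybrid edges of N, let T_D be the
   tree it displays.  Two facts give the identity.

   Restricting D to the edges of M entering hybrid nodes of M yields a valid
   deletion set D|_M of M, and all fibres of D |-> D|_M have the same size:
   the part of D inside M can be swapped for any other valid choice.  Hence
   averaging over the choices for N is averaging over the choices for M.

   T_D|_Q and the tree displayed by M under D|_M have the same quartet split.
   After D is deleted every vertex keeps at most one in-edge, so an up-down
   path of T_D is one of N, and the edges of T_D|_Q are edges of that tree.
   Both connect the four leaves, and the larger one is a forest (one in-edge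
   per vertex in an acyclic network), so an edge separating xy from zw in one
   also does so in the other. *)

From Pilot Require Import Defs.
From HB Require Import structures.
From mathcomp Require Import all_boot all_order all_algebra.
From mathcomp Require Import boolp zify ring.

Set Implicit Arguments.
Unset Strict Implicit.
Unset Printing Implicit Defensive.

Import GRing.Theory Num.Theory.

Lemma connect_last (T : finType) (e : rel T) x y :
  connect e x y -> x != y -> exists2 z, connect e x z & e z y.
Proof.
case/connectP=> s; case/lastP: s => [|s z] /=; first by move=> _ -> /eqP.
rewrite rcons_path last_rcons => /andP[es ez] -> _.
by exists (last x s) => //; apply/connectP; exists s.
Qed.

Lemma connect_first (T : finType) (e : rel T) x y :
  connect e x y -> x != y -> exists2 z, e x z & connect e z y.
Proof.
case/connectP=> [[|z s]] /=; first by move=> _ -> /eqP.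
by case/andP=> xz zs -> _; exists z => //; apply/connectP; exists s.
Qed.

Lemma acyclic_ind (T : finType) (e : rel T) :
  (forall u v, e u v -> ~~ connect e v u) -> forall P : T -> Prop,
  (forall v, (forall u, e u v -> P u) -> P v) -> forall v, P v.
Proof.
move=> acyc P IH v; have [n] := ubnP #|[set u | connect e u v]|.
elim: n v => // n IHn v; rewrite ltnS => anc_v; apply: IH => u euv.
apply: IHn; apply: leq_trans anc_v; apply: proper_card; apply/properP; split.
  by apply/subsetP => w; rewrite !inE => /connect_trans; apply; apply: connect1.
by exists v; rewrite !inE ?connect0 //; apply: acyc.
Qed.

Lemma count_enum (T : finType) (q : pred T) : count q (enum T) = #|q|.
Proof. by rewrite enumT cardE /enum_mem size_filter. Qed.

Lemma count_split (T : eqType) (a p : pred T) (s : seq T) :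
  count a s = count a (filter p s) + count a (filter (predC p) s).
Proof.
have : perm_eq (filter p s ++ filter (predC p) s) s by rewrite perm_filterC.
by move/permP/(_ a); rewrite count_cat.
Qed.

Lemma two_le_count (T : eqType) (a : pred T) (s : seq T) x y :
  x != y -> x \in s -> y \in s -> a x -> a y -> 1 < count a s.
Proof.
move=> xy xs ys ax ay; rewrite -size_filter; change (size [:: x; y] <= size (filter a s)).
apply: uniq_leq_size; first by rewrite /= inE xy.
by move=> z; rewrite !inE mem_filter => /orP[]/eqP->; rewrite ?ax ?ay.
Qed.

Lemma sum_const_fibers (A B : finType) (R : nmodType) (PA : pred A) (PB : pred B)
    (h : A -> B) (F : B -> R) n :
  (forall a, PA a -> PB (h a)) ->
  (forall b, PB b -> #|[set a | PA a && (h a == b)]| = n) ->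
  (\sum_(a | PA a) F (h a) = (\sum_(b | PB b) F b) *+ n)%R.
Proof.
move=> hAB fib; rewrite (partition_big h PB) //= -sumrMnl; apply: eq_bigr => b Pb.
rewrite (eq_bigr (fun _ => F b)) => [|a /andP[_ /eqP ->] //].
by rewrite sumr_const -(fib b Pb) cardsE.
Qed.

(** * Graphs given by indexed edges *)

Lemma edge_at_map (V : finType) (T : Type) (g : T -> medge V) (t : seq T) x0
    (j : 'I_(size (map g t))) :
  edge_at (map g t) j = g (nth x0 t j).
Proof.
rewrite /edge_at (tnth_nth (g x0)) /= (nth_map x0) //.
by rewrite -(size_map g); exact: ltn_ord.
Qed.

Section EdgeGraph.
Variables (V I : finType) (f : I -> medge V).
Local Notation tail k := (f k).1.1.
Local Notation head k := (f k).1.2.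

Definition adjp (P : pred I) : rel V :=
  fun u v => [exists k, P k && incident (f k) u v].

Definition arcp (P : pred I) : rel V :=
  fun u v => [exists k, [&& P k, tail k == u & head k == v]].

Definition separates (P : pred I) (a b c d : V) : bool :=
  [&& connect (adjp P) a b, connect (adjp P) c d & ~~ connect (adjp P) a c].

Definition has_splitp (P : pred I) (a b c d : V) : bool :=
  [exists k, P k && separates (predD1 P k) a b c d].

Definition bridge (P : pred I) (k : I) : bool :=
  ~~ connect (adjp (predD1 P k)) (tail k) (head k).

Lemma adjp_sym P : symmetric (adjp P).
Proof. by move=> u v; apply: eq_existsb => k; rewrite /incident orbC. Qed.

Lemma connect_adjp_sym P : connect_sym (adjp P).
Proof. exact/sym_connect_sym/adjp_sym. Qed.

Lemma sub_connect_adjp (P Q : pred I) :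
  subpred P Q -> subrel (connect (adjp P)) (connect (adjp Q)).
Proof.
move=> PQ; apply: connect_sub => u v /existsP[k /andP[Pk uv]].
by apply/connect1/existsP; exists k; rewrite PQ.
Qed.

Lemma eq_connect_adjp (P Q : pred I) : P =1 Q -> connect (adjp P) =2 connect (adjp Q).
Proof. by move=> PQ; apply: eq_connect => u v; apply: eq_existsb => k; rewrite PQ. Qed.

Lemma eq_has_splitp (P Q : pred I) a b c d :
  P =1 Q -> has_splitp P a b c d = has_splitp Q a b c d.
Proof.
move=> PQ; apply: eq_existsb => k; rewrite PQ /separates.
by rewrite !(@eq_connect_adjp (predD1 P k) (predD1 Q k)) // => k' /=; rewrite PQ.
Qed.

Lemma connect_adjp_inv (P : pred I) (s : V -> bool) u v :
  (forall k, P k -> s (tail k) = s (head k)) -> connect (adjp P) u v -> s u = s v.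
Proof.
move=> sP; apply: closed_connect => x y /existsP[k /andP[Pk]].
by case/orP=> /andP[/eqP <- /eqP <-]; rewrite /in_mem /= sP.
Qed.

Lemma connect_adjpD1 (P : pred I) k0 u v :
  let C := connect (adjp (predD1 P k0)) in
  connect (adjp P) u v ->
  [\/ C u v, C u (tail k0) /\ C v (head k0) | C u (head k0) /\ C v (tail k0)].
Proof.
move=> C /connectP[s]; elim: s u => [|w s IH] u /=.
  by move=> _ ->; apply: Or31; apply: connect0.
case/andP=> /existsP[k /andP[Pk ukw]] /IH {}IH /IH {IH}.
have sym : connect_sym (adjp (predD1 P k0)) := connect_adjp_sym _.
have [Ekk0|kk0] := eqVneq k k0.
  move: ukw; rewrite Ekk0 => /orP[] /andP[/eqP <- /eqP <-] [Cwv|[Cwt Cvh]|[Cwh Cvt]].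
  - by apply: Or32; rewrite /C connect0 sym.
  - by apply: Or32; rewrite /C connect0.
  - by apply: Or31; rewrite /C sym.
  - by apply: Or33; rewrite /C connect0 sym.
  - by apply: Or31; rewrite /C sym.
  - by apply: Or33; rewrite /C connect0.
have Cuw : C u w by apply/connect1/existsP; exists k; rewrite /= kk0 Pk.
case=> [Cwv|[Cwt Cvh]|[Cwh Cvt]].
- by apply: Or31; apply: connect_trans Cwv.
- by apply: Or32; split => //; apply: connect_trans Cwt.
- by apply: Or33; split => //; apply: connect_trans Cwh.
Qed.

(* A has-split of a forest [K] can be read off any subforest [P] that still
   connects the four leaves. *)
Lemma has_splitp_sub (K P : pred I) a b c d :
  subpred P K -> connect (adjp P) a b -> connect (adjp P) c d ->
  connect (adjp P) a c -> (forall k, K k -> bridge K k) ->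
  has_splitp K a b c d = has_splitp P a b c d.
Proof.
move=> PK Pab Pcd Pac Kbridge.
have subD1 k0 : subrel (connect (adjp (predD1 P k0))) (connect (adjp (predD1 K k0))).
  by apply: sub_connect_adjp => k /andP[kk0 Pk]; rewrite /= kk0 PK.
have back k0 u v : P k0 -> connect (adjp P) u v ->
    connect (adjp (predD1 K k0)) u v -> connect (adjp (predD1 P k0)) u v.
  move=> Pk0 Puv Kuv; have := Kbridge k0 (PK _ Pk0); rewrite /bridge.
  have sym := connect_adjp_sym (predD1 K k0).
  case: (connect_adjpD1 k0 Puv) => [//|[/subD1 ut /subD1 vh]|[/subD1 uh /subD1 vt]].
  - by rewrite (connect_trans _ vh) // (connect_trans _ Kuv) // sym.
  - by rewrite (connect_trans _ uh) // sym (connect_trans Kuv) // sym.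
apply/existsP/existsP => -[k0 /andP[k0in /and3P[ab cd nac]]].
  have Pk0 : P k0.
    apply: contraNT nac => nPk0; apply: sub_connect_adjp Pac => k Pk /=.
    by rewrite PK // andbT; apply: contraNneq nPk0 => <-.
  exists k0; rewrite Pk0 /separates /=; apply/and3P; split.
  - exact: (back k0 a b Pk0 Pab ab).
  - exact: (back k0 c d Pk0 Pcd cd).
  by apply/negP => /subD1; apply/negP.
exists k0; rewrite PK //= /separates; apply/and3P; split; [exact: subD1 | exact: subD1 |].
apply/negP => Kac; move/negP: nac; apply; exact: back Kac.
Qed.

Lemma bridge_inj_head (F : pred I) k0 :
  F k0 -> {in F &, injective (fun k => head k)} ->
  ~~ connect (arcp F) (head k0) (tail k0) -> bridge F k0.
Proof.
move=> Fk0 inj acyc; pose s x := connect (arcp (predD1 F k0)) (head k0) x.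
have s_inv k : predD1 F k0 k -> s (tail k) = s (head k).
  move=> /andP[kk0 Fk]; apply/idP/idP => [sk|].
    by apply: connect_trans sk (connect1 _); apply/existsP; exists k; rewrite /= kk0 Fk !eqxx.
  have hk : head k0 != head k by apply: contra_neq kk0 => /(inj _ _ Fk0 Fk) ->.
  case/connect_last => // z sz /existsP[k' /and3P[/andP[_ Fk'] /eqP zk' /eqP hk']].
  by rewrite -(inj _ _ Fk' Fk hk') zk'.
apply/negP => /(connect_adjp_inv s_inv); rewrite /s connect0 => st.
move/negP: acyc; apply; apply: (connect_sub _ st) => u v /existsP[k /and3P[/andP[_ Fk] ? ?]].
by apply/connect1/existsP; exists k; apply/and3P.
Qed.

Lemma adj_map (t : seq I) : adj (map f t) =2 adjp (mem t).
Proof.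
move=> u v; rewrite /adj has_map.
by apply/hasP/existsP => [[k kt ukv]|[k /andP[kt ukv]]]; exists k => //; apply/andP.
Qed.

Lemma has_split_map (t : seq I) a b c d :
  uniq t -> has_split (map f t) a b c d = has_splitp (mem t) a b c d.
Proof.
move=> ut; have st (i : 'I_(size (map f t))) : i < size t by rewrite -(size_map f).
have drop_i (i : 'I_(size (map f t))) i0 :
    connect (adj (drop_edge (map f t) i)) =2 connect (adjp (predD1 (mem t) (nth i0 t i))).
  apply: eq_connect => u v; rewrite /adj /drop_edge has_map.
  apply/hasP/existsP => [[j]|[k /andP[/andP[ki kt] ukv]]].
    rewrite mem_filter => /andP[ji _] /=; rewrite (edge_at_map i0) => ujv.
    exists (nth i0 t j); rewrite /= mem_nth ?st // ujv !andbT.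
    by rewrite nth_uniq ?st.
  have kt' : index k t < size (map f t) by rewrite size_map index_mem.
  exists (Ordinal kt'); last by rewrite /= (edge_at_map i0) /= nth_index.
  rewrite mem_filter mem_enum andbT; apply: contra ki => /eqP <- /=.
  by rewrite nth_index.
apply/existsP/existsP => [[i]|[k /andP[kt]]].
  pose i0 := tnth (in_tuple t) (Ordinal (st i)).
  rewrite /separates !(drop_i i i0) => sep; exists (nth i0 t i).
  by rewrite sep andbT; exact: (mem_nth i0 (st i)).
have kt' : index k t < size (map f t) by rewrite size_map index_mem.
by exists (Ordinal kt'); rewrite /separates !(drop_i _ k) /= nth_index.
Qed.

End EdgeGraph.

(** * Sublists of edges, restrictions and up-down paths *)

Definition undirect {V : finType} (e : medge V) : medge V := (e.1.1, e.1.2, false).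

Section SubEdges.
Variables (V : finType) (G : seq (medge V)) (h : medge V -> medge V).
Variable p : pred 'I_(size G).

Let idx := [seq i <- enum 'I_(size G) | p i].
Let T := [seq h (edge_at G i) | i <- idx].

Lemma size_sub_edges : size T = size idx. Proof. exact: size_map. Qed.

Definition sub_index (j : 'I_(size T)) : 'I_(size G) :=
  tnth (in_tuple idx) (cast_ord size_sub_edges j).

Lemma edge_at_sub_edges j : edge_at T j = h (edge_at G (sub_index j)).
Proof.
rewrite /sub_index /edge_at (tnth_nth (h (edge_at G (sub_index j)))) /=.
rewrite (tnth_nth (sub_index j)) /= (nth_map (sub_index j)) //.
by rewrite -size_sub_edges.
Qed.

Lemma sub_index_inj : injective sub_index.
Proof.
have /tuple_uniqP tnth_inj : uniq (in_tuple idx) by rewrite filter_uniq ?enum_uniq.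
by move=> j j' /tnth_inj /cast_ord_inj.
Qed.

Lemma sub_indexP j : p (sub_index j).
Proof.
have := mem_tnth (cast_ord size_sub_edges j) (in_tuple idx).
by rewrite mem_filter => /andP[].
Qed.

Lemma sub_index_onto k : p k -> exists j, sub_index j = k.
Proof.
move=> pk; have /tnthP[i ->] : k \in in_tuple idx by rewrite mem_filter pk mem_enum.
by exists (cast_ord (esym size_sub_edges) i); rewrite /sub_index cast_ordKV.
Qed.

End SubEdges.

Section SubEdgeIndices.
Variables (V : finType) (G : seq (medge V)).

Definition display_index (D : {set 'I_(size G)}) :
  'I_(size (display G D)) -> 'I_(size G) :=
  @sub_index V G undirect (fun i => i \notin D).
Arguments display_index : clear implicits.

Lemma edge_at_display D j :
  edge_at (display G D) j = undirect (edge_at G (display_index D j)).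
Proof. exact: edge_at_sub_edges. Qed.

Lemma display_index_inj D : injective (display_index D).
Proof. exact: sub_index_inj. Qed.

Lemma display_index_kept D j : display_index D j \notin D.
Proof. exact: (@sub_indexP V G undirect (fun i => i \notin D)). Qed.

Definition restrict_index (Y : seq V) :
  'I_(size (restrict G Y)) -> 'I_(size G) :=
  @sub_index V G id (fun i => `[< on_updown G Y i >]).
Arguments restrict_index : clear implicits.

Lemma edge_at_restrict Y j : edge_at (restrict G Y) j = edge_at G (restrict_index Y j).
Proof. exact: (@edge_at_sub_edges V G id (fun i => `[< on_updown G Y i >]) j). Qed.

Lemma restrict_index_inj Y : injective (restrict_index Y).
Proof. exact: sub_index_inj. Qed.

Lemma restrict_index_on_updown Y j : on_updown G Y (restrict_index Y j).
Proof. exact/asboolP/(@sub_indexP V G id (fun i => `[< on_updown G Y i >])). Qed.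

Lemma restrict_index_onto Y k : on_updown G Y k -> exists j, restrict_index Y j = k.
Proof. by move/asboolP; apply: (@sub_index_onto V G id). Qed.

End SubEdgeIndices.

Arguments display_index {V G} D _.
Arguments restrict_index {V G} Y _.

Section RestrictConnect.
Variable V : finType.
Implicit Types (T : seq (medge V)) (Y : seq V).

Lemma adj_edge_at T u v : adj T u v = [exists i, incident (edge_at T i) u v].
Proof.
apply/hasP/existsP => [[e eT uev]|[i uiv]]; last by exists (edge_at T i); rewrite ?mem_tnth.
have ie : index e T < size T by rewrite index_mem.
by exists (Ordinal ie); rewrite /edge_at (tnth_nth e) /= nth_index.
Qed.

Lemma adj_path_edges T u p : path (adj T) u p ->
  exists2 es : seq 'I_(size T), size es = size p &
    forall j, j < size p -> forall x0 e0,
      incident (nth e0 (map (edge_at T) es) j) (nth x0 (u :: p) j) (nth x0 p j).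
Proof.
elim: p u => [|w p IH] u /=; first by exists [::].
rewrite adj_edge_at => /andP[/existsP[i uiw] /IH[es size_es inc_es]].
exists (i :: es) => [|[|j] jp x0 e0 //=]; first by rewrite /= size_es.
exact: inc_es.
Qed.

Lemma mem_restrict T Y i : on_updown T Y i -> edge_at T i \in restrict T Y.
Proof. by move=> Yi; apply: map_f; rewrite mem_filter mem_enum andbT; apply/asboolP. Qed.

Lemma connect_restrict T Y u v :
  (forall i, ~~ (edge_at T i).2) -> u \in Y -> v \in Y ->
  connect (adj T) u v -> connect (adj (restrict T Y)) u v.
Proof.
move=> undir uY vY; have [-> _|uv] := eqVneq u v; first exact: connect0.
case/connectP=> p0 p0_path v_last; move: uv vY; rewrite {}v_last.
case: (shortenP p0_path) => p p_path p_uniq _ uv vY {p0 p0_path}.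
have [es size_es inc_es] := adj_path_edges p_path.
pose e j := nth (u, u, false) (map (edge_at T) es) j.
have e_es j : j < size p -> exists2 i, i \in es & e j = edge_at T i.
  by move=> jp; apply/mapP; rewrite /e mem_nth // size_map size_es.
have ud : updown_path T u (last u p) p es.
  split=> // [j jp|j k /andP[jk kp]]; first exact: inc_es.
  have [i _ eji] := e_es j (ltn_trans jk kp).
  by rewrite -/(e j) eji /step_down (negbTE (undir i)).
apply/connectP; exists p => //; apply/(pathP u) => j jp.
apply/hasP; exists (e j); last exact: inc_es.
have [i ies ->] := e_es j jp; apply: mem_restrict.
by exists u, (last u p), p, es; split.
Qed.

End RestrictConnect.

Section UpDownPaths.
Variables (V : finType) (G : seq (medge V)).
Local Notation hd k := (edge_at G k).1.2.

(* Once a simple walk whose edges have distinct heads traverses an edge from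
   tail to head, it keeps doing so: turning back would enter a vertex through
   a second edge with the same head. *)
Lemma updown_path_inj_head a b p es :
  uniq (a :: p) -> last a p = b -> size es = size p ->
  (forall j, j < size p ->
     incident (nth (a, a, false) (map (edge_at G) es) j) (nth a (a :: p) j) (nth a p j)) ->
  {in es &, injective (fun k => hd k)} ->
  updown_path G a b p es.
Proof.
move=> uniq_p last_p size_es inc_es inj_es; split=> //.
pose x j := nth a (a :: p) j; pose e j := nth (a, a, false) (map (edge_at G) es) j.
have x_inj i i' : i <= size p -> i' <= size p -> x i = x i' -> i = i'.
  by move=> ip i'p; move/eqP; rewrite nth_uniq //= => /eqP.
have e_es j : j < size p -> exists2 k, k \in es & e j = edge_at G k.
  by move=> jp; apply/mapP; rewrite /e mem_nth // size_map size_es.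
pose fwd j := (e j).1.1 = x j /\ (e j).1.2 = x j.+1.
have fwd_tl j : j < size p -> (e j).1.1 = x j -> fwd j.
  move=> jp tj; case/orP: (inc_es j jp) => /andP[/eqP t /eqP h]; first by split.
  by have := x_inj _ _ (ltnW jp) jp (etrans (esym tj) t); lia.
have fwdS j : j.+1 < size p -> fwd j -> fwd j.+1.
  move=> jp [tj hj]; case/orP: (inc_es j.+1 jp) => /andP[/eqP t /eqP h]; first by split.
  have [k kes ek] := e_es j (ltnW jp); have [k' k'es ek'] := e_es j.+1 jp.
  have kk' : k = k' by apply: inj_es => //=; rewrite -ek -ek' hj.
  have eq_e : e j.+1 = e j by rewrite ek ek' kk'.
  have : x j = x j.+2 by rewrite -tj -eq_e; exact: t.
  by move/(x_inj _ _ (ltnW (ltnW jp)) jp); lia.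
have fwd_le j m : j <= m < size p -> fwd j -> fwd m.
  elim: m => [|m IH]; first by rewrite leqn0 => /andP[/eqP ->].
  case/andP; rewrite leq_eqVlt => /orP[/eqP -> //|jm mp] fj.
  by apply: (fwdS m mp); apply: IH => //; apply/andP; split; [exact: jm | exact: ltnW].
move=> j k /andP[jk kp]; apply/negP => /andP[/andP[_ /eqP tj] /andP[_ /eqP hk]].
have jkp : j <= k < size p by rewrite (ltnW jk).
have [_ hk'] := fwd_le j k jkp (fwd_tl j (ltn_trans jk kp) tj).
by have := x_inj _ _ (ltnW kp) kp (etrans (esym hk) hk'); lia.
Qed.

End UpDownPaths.

(** * Choices of deleted hybrid edges *)

Section Deletions.
Variables (V : finType) (G : seq (medge V)).
Local Notation hd k := (edge_at G k).1.2.
Local Notation dir k := (edge_at G k).2.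

Lemma count_edges (q : pred (medge V)) : count q G = #|[set k | q (edge_at G k)]|.
Proof.
transitivity (count q (map (edge_at G) (enum 'I_(size G)))).
  by rewrite /edge_at map_tnth_enum.
by rewrite count_map count_enum cardsE.
Qed.

Lemma hybrid_nodeE v : hybrid_node G v = (#|[set k | dir k && (hd k == v)]| == 2).
Proof. by rewrite /hybrid_node count_edges. Qed.

Lemma valid_del_mem D k : valid_del G D -> k \in D -> dir k && hybrid_node G (hd k).
Proof. by case/andP => /forallP /(_ k) /implyP. Qed.

Lemma valid_del_card D v :
  valid_del G D -> hybrid_node G v -> #|[set i in D | hd i == v]| = 1.
Proof. by case/andP => _ /forallP /(_ v) /implyP hD /hD /eqP. Qed.

Lemma valid_del_in_edge D v :
  valid_del G D -> hybrid_node G v -> exists2 k, k \in D & hd k = v.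
Proof.
move=> vD /(valid_del_card vD) /eqP /cards1P[k Ek].
by have := set11 k; rewrite -Ek inE => /andP[kD /eqP]; exists k.
Qed.

Lemma valid_del_inj D : valid_del G D -> {in D &, injective (fun k => hd k)}.
Proof.
move=> vD k k' kD k'D hkk'; have /andP[_ /(valid_del_card vD)] := valid_del_mem vD kD.
case/eqP/cards1P => x Ex.
have : k \in [set i in D | hd i == hd k] by rewrite inE kD eqxx.
have : k' \in [set i in D | hd i == hd k] by rewrite inE k'D hkk' eqxx.
by rewrite Ex !inE => /eqP -> /eqP ->.
Qed.

Lemma valid_del_exists : exists D, valid_del G D.
Proof.
pose pick_in v := [pick k | dir k && (hd k == v)].
exists [set k | hybrid_node G (hd k) && (pick_in (hd k) == Some k)].
apply/andP; split.
  apply/forallP => k; apply/implyP; rewrite inE => /andP[-> /eqP]; rewrite andbT.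
  by rewrite /pick_in; case: pickP => // k' /andP[dk' _] [<-].
apply/forallP => v; apply/implyP => hv; have [k /andP[_ /eqP hk] pick_v] :
    exists2 k, dir k && (hd k == v) & pick_in v = Some k.
  rewrite /pick_in; case: pickP => [k ? | none]; first by exists k.
  move: hv; rewrite hybrid_nodeE.
  have -> : [set k | dir k && (hd k == v)] = set0 by apply/setP => k; rewrite !inE none.
  by rewrite cards0.
apply/cards1P; exists k; apply/setP => k'; rewrite !inE.
apply/idP/eqP => [/andP[/andP[_ /eqP pick_k'] /eqP hk']|->].
  by move: pick_k'; rewrite hk' pick_v => -[].
by rewrite hk hv pick_v !eqxx.
Qed.

End Deletions.

(** * Restricting a semi-directed network *)

Section SemiDirected.
Variables (V : finType) (G : seq (medge V)) (r src : V).
Local Notation tl k := (edge_at G k).1.1.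
Local Notation hd k := (edge_at G k).1.2.
Local Notation dir k := (edge_at G k).2.
Local Notation arcG := (arcp (edge_at G) predT).
Local Notation kept D := [pred k | k \notin D].

(* [r] is the suppressed root, an isolated vertex, and [src] the tail of the
   edge that replaces the two root edges. *)
Hypothesis in_edges_le2 : forall v, #|[set k | hd k == v]| <= 2.
Hypothesis shared_head_dir : forall k1 k2, k1 != k2 -> hd k1 = hd k2 -> dir k1.
Hypothesis arcG_acyclic : forall u v, arcG u v -> ~~ connect arcG v u.
Hypothesis tl_neq_root : forall k, tl k != r.
Hypothesis sourceless_src : forall v, v != r -> (forall k, hd k != v) -> v = src.

Lemma no_three_in_edges k1 k2 k3 :
  k1 != k2 -> k1 != k3 -> k2 != k3 -> hd k1 = hd k2 -> hd k1 = hd k3 -> False.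
Proof.
move=> n12 n13 n23 e12 e13.
have U : uniq [:: k1; k2; k3] by rewrite /= !inE negb_or n12 n13 n23.
have : #|[:: k1; k2; k3]| <= #|[set k | hd k == hd k1]|.
  apply: subset_leq_card; apply/subsetP => k.
  by rewrite !inE => /or3P[]/eqP->; rewrite -?e12 -?e13.
by move/leq_trans/(_ (in_edges_le2 _)); rewrite (card_uniqP U).
Qed.

Lemma card_shared_head (S : pred 'I_(size G)) k1 k2 :
  k1 != k2 -> hd k1 = hd k2 -> S k1 -> S k2 ->
  #|[set k | [&& S k, dir k & hd k == hd k1]]| = 2.
Proof.
move=> n12 e12 S1 S2; apply/eqP; rewrite eqn_leq; apply/andP; split.
  apply: leq_trans (in_edges_le2 (hd k1)); apply: subset_leq_card.
  by apply/subsetP => k; rewrite !inE => /and3P[_ _ ->].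
have d2 : dir k2 by apply: (shared_head_dir (k1 := k2) (k2 := k1)); rewrite // eq_sym.
have <- : #|[set k1; k2]| = 2 by rewrite cards2 n12.
apply: subset_leq_card; apply/subsetP => k.
by rewrite !inE => /orP[]/eqP->; rewrite ?S1 ?S2 ?(shared_head_dir n12 e12) ?d2 ?e12 eqxx.
Qed.

Lemma shared_head_hybrid k1 k2 : k1 != k2 -> hd k1 = hd k2 -> hybrid_node G (hd k1).
Proof. by move=> n12 e12; rewrite hybrid_nodeE -(card_shared_head (S := predT) n12 e12). Qed.

Lemma kept_head_inj D k1 k2 :
  valid_del G D -> k1 \notin D -> k2 \notin D -> hd k1 = hd k2 -> k1 = k2.
Proof.
move=> vD n1 n2 e12; apply/eqP; apply: contraT => n12.
have [k kD hk] := valid_del_in_edge vD (shared_head_hybrid n12 e12).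
have n13 : k1 != k by apply: contraNneq n1 => ->.
have n23 : k2 != k by apply: contraNneq n2 => ->.
by case: (no_three_in_edges n12 n13 n23 e12 (esym hk)).
Qed.

Lemma kept_in_edge D v :
  valid_del G D -> v != r -> v != src -> exists2 k, k \notin D & hd k = v.
Proof.
move=> vD vr vs; have [k hk] : exists k, hd k = v.
  have [/existsP[k /eqP hk]|no_in] := boolP [exists k, hd k == v]; first by exists k.
  exfalso; move/eqP: vs; apply; apply: sourceless_src => // k.
  by apply: contraNneq no_in => hk; apply/existsP; exists k; rewrite hk.
have [kD|] := boolP (k \in D); last by exists k.
have /andP[_] := valid_del_mem vD kD; rewrite hybrid_nodeE => /cards2P[k1 [k2 [n12 E12]]].
have in_edge k' : k' \in [set k1; k2] -> dir k' && (hd k' == hd k) by rewrite -E12 inE.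
have [k' k'k k'in] : exists2 k', k' != k & k' \in [set k1; k2].
  have [e1k | n1k] := eqVneq k1 k; last by exists k1; rewrite ?set21.
  by exists k2; rewrite ?set22 // -e1k eq_sym.
exists k'; last by have /andP[_ /eqP ->] := in_edge k' k'in.
apply: contra k'k => k'D; apply/eqP; apply: (valid_del_inj vD) => //.
by have /andP[_ /eqP] := in_edge k' k'in.
Qed.

Lemma kept_connected D x y :
  valid_del G D -> x != r -> y != r -> connect (adjp (edge_at G) (kept D)) x y.
Proof.
move=> vD; have to_src : forall v, v != r -> connect (adjp (edge_at G) (kept D)) v src.
  apply: (acyclic_ind arcG_acyclic) => v IH vr.
  have [-> | vs] := eqVneq v src; first exact: connect0.
  have [k kD hk] := kept_in_edge vD vr vs.
  apply: connect_trans (IH (tl k) _ (tl_neq_root k)).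
    by apply/connect1/existsP; exists k; rewrite /= kD /incident hk !eqxx orbT.
  by apply/existsP; exists k; rewrite hk !eqxx.
move=> xr yr; rewrite (connect_trans (to_src x xr)) // connect_adjp_sym.
exact: to_src.
Qed.

Lemma display_updown_path D a b p es :
  valid_del G D -> updown_path (display G D) a b p es ->
  updown_path G a b p (map (display_index D) es).
Proof.
move=> vD [uniq_p last_p size_es inc_es _].
have edges_es : map (edge_at (display G D)) es =
    map undirect (map (edge_at G) (map (display_index D) es)).
  by rewrite -!map_comp; apply: eq_map => j; rewrite /= edge_at_display.
apply: updown_path_inj_head; rewrite ?size_map //.
  move=> j jp; have := inc_es j jp; rewrite edges_es (nth_map (a, a, false)) //.
  by rewrite !size_map size_es.
move=> _ _ /mapP[j _ ->] /mapP[j' _ ->].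
exact: kept_head_inj vD (display_index_kept _) (display_index_kept _).
Qed.

Variable Y : seq V.
Hypothesis root_notin_Y : r \notin Y.

Local Notation M := (restrict G Y).
Local Notation onY k := `[< on_updown G Y k >].
Local Notation sig := (restrict_index Y).
Local Notation ug k := (undirect (edge_at G k)).

Lemma hybrid_node_restrict v :
  hybrid_node M v = (#|[set k | [&& onY k, dir k & hd k == v]]| == 2).
Proof.
rewrite /hybrid_node /restrict count_map count_filter count_enum.
by congr (_ == _); apply: eq_card => k; rewrite !inE /= andbC andbA.
Qed.

Lemma hybrid_restrict_in_edges v : hybrid_node M v -> exists k1 k2,
  [/\ k1 != k2, hd k1 = v, hd k2 = v &
      forall k, [&& onY k, dir k & hd k == v] = (k \in [set k1; k2])].
Proof.
rewrite hybrid_node_restrict => /cards2P[k1 [k2 [n12 E12]]].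
have in_edge k : k \in [set k1; k2] -> hd k = v by rewrite -E12 inE => /and3P[_ _ /eqP].
exists k1, k2; split; rewrite ?in_edge ?set21 ?set22 //.
by move=> k; rewrite -E12 inE.
Qed.

Lemma hybrid_restrict_hybrid v : hybrid_node M v -> hybrid_node G v.
Proof.
case/hybrid_restrict_in_edges => k1 [k2 [n12 h1 h2 _]].
by rewrite -h1; apply: (shared_head_hybrid n12); rewrite h1 h2.
Qed.

Lemma hybrid_restrict_on_updown v k : hybrid_node M v -> dir k -> hd k = v -> onY k.
Proof.
case/hybrid_restrict_in_edges => k1 [k2 [n12 h1 h2 E12]] dk hk.
have [->|n1] := eqVneq k k1; first by have := E12 k1; rewrite set21 => /and3P[].
have [->|n2] := eqVneq k k2; first by have := E12 k2; rewrite set22 => /and3P[].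
case: (no_three_in_edges n12 (k3 := k)); rewrite 1?eq_sym //.
  by rewrite h1 h2.
by rewrite h1 hk.
Qed.

Lemma connect_restrict_display D x y :
  valid_del G D -> x \in Y -> y \in Y -> connect (adj (restrict (display G D) Y)) x y.
Proof.
move=> vD xY yY; apply: connect_restrict => // [j|]; first by rewrite edge_at_display.
have Y_nr z : z \in Y -> z != r by move=> zY; apply: contraNneq root_notin_Y => <-.
have := kept_connected vD (Y_nr x xY) (Y_nr y yY).
rewrite (eq_connect (adj_map (fun k => ug k) _)).
by apply: sub_connect_adjp => k /=; rewrite mem_filter mem_enum andbT.
Qed.

Definition hybrid_restrict_edges : {set 'I_(size G)} :=
  [set k | onY k && hybrid_node M (hd k)].
Local Notation H := hybrid_restrict_edges.

Definition restrict_del (D : {set 'I_(size G)}) : {set 'I_(size M)} :=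
  [set j | sig j \in D :&: H].

Lemma in_restrict_del D j : (j \in restrict_del D) = (sig j \in D :&: H).
Proof. by rewrite inE. Qed.

Definition swap_del (D' : {set 'I_(size M)}) (D : {set 'I_(size G)}) :=
  (D :\: H) :|: sig @: D'.

Lemma restrict_index_hybrid j : (sig j \in H) = hybrid_node M (hd (sig j)).
Proof. by rewrite inE; have /asboolP -> := restrict_index_on_updown j. Qed.

Lemma lift_restrict_del D : sig @: restrict_del D = D :&: H.
Proof.
apply/setP => k; apply/imsetP/idP => [[j] | ]; first by rewrite inE => ? ->.
rewrite !inE => /andP[kD /andP[onYk hk]].
have [j Ej] := restrict_index_onto (asboolW onYk).
by exists j; rewrite // !inE Ej kD onYk hk.
Qed.

Lemma lift_valid_sub D' : valid_del M D' -> sig @: D' \subset H.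
Proof.
move=> vD'; apply/subsetP => _ /imsetP[j jD' ->]; rewrite restrict_index_hybrid.
by have /andP[_] := valid_del_mem vD' jD'; rewrite edge_at_restrict.
Qed.

Lemma valid_restrict_del D : valid_del G D -> valid_del M (restrict_del D).
Proof.
move=> vD; apply/andP; split.
  apply/forallP => j; apply/implyP; rewrite !inE edge_at_restrict.
  case/andP=> jD /andP[_ hj]; by have /andP[-> _] := valid_del_mem vD jD.
apply/forallP => v; apply/implyP => hv.
have [k kD hk] := valid_del_in_edge vD (hybrid_restrict_hybrid hv).
have /andP[dk _] := valid_del_mem vD kD.
have onYk := hybrid_restrict_on_updown hv dk hk.
have [j0 Ej0] := restrict_index_onto (asboolW onYk).
apply/cards1P; exists j0; apply/setP => j; rewrite !inE edge_at_restrict.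
apply/idP/eqP => [/andP[/andP[jD _] /eqP hj] | ->].
  by apply: restrict_index_inj; rewrite Ej0; apply: (valid_del_inj vD); rewrite ?hj.
by rewrite Ej0 kD onYk hk hv eqxx.
Qed.

Lemma valid_swap_del D' D :
  valid_del G D -> valid_del M D' -> valid_del G (swap_del D' D).
Proof.
move=> vD vD'; apply/andP; split.
  apply/forallP => k; apply/implyP; rewrite !inE => /orP[/andP[_ kD]|].
    exact: valid_del_mem vD kD.
  case/imsetP => j jD' ->; have := valid_del_mem vD' jD'.
  by rewrite edge_at_restrict => /andP[-> /hybrid_restrict_hybrid].
apply/forallP => v; apply/implyP => hv; apply/eqP.
have [hMv|nhMv] := boolP (hybrid_node M v).
  have -> : [set i in swap_del D' D | hd i == v] =
      sig @: [set j in D' | (edge_at M j).1.2 == v].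
    apply/setP => k; rewrite !inE; apply/idP/imsetP.
      case/andP => /orP[/andP[nH kD]|/imsetP[j jD' ->]] /eqP hk.
        have /andP[dk _] := valid_del_mem vD kD; move: nH.
        by rewrite (hybrid_restrict_on_updown hMv dk hk) hk hMv.
      by exists j; rewrite // inE jD' edge_at_restrict hk eqxx.
    case=> j; rewrite inE edge_at_restrict => /andP[jD' /eqP hj] ->.
    by rewrite imset_f // orbT hj eqxx.
  by rewrite card_imset ?(valid_del_card vD') //; exact: restrict_index_inj.
have -> : [set i in swap_del D' D | hd i == v] = [set i in D | hd i == v].
  apply/setP => k; rewrite !inE; apply/idP/idP.
    case/andP => /orP[/andP[_ ->] //|/imsetP[j jD' ->]] /eqP hk.
    have := valid_del_mem vD' jD'; rewrite edge_at_restrict hk => /andP[_ hMv].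
    by rewrite hMv in nhMv.
  by case/andP => kD /eqP hk; rewrite kD hk eqxx (negbTE nhMv) !andbF.
exact: valid_del_card vD hv.
Qed.

Lemma restrict_swap_del D' D : valid_del M D' -> restrict_del (swap_del D' D) = D'.
Proof.
move=> vD'; apply/setP => j; rewrite inE in_setI in_setU in_setD.
rewrite (mem_imset _ _ (@restrict_index_inj _ _ _)).
have [jD' | _] := boolP (j \in D').
  by rewrite orbT (subsetP (lift_valid_sub vD')) ?imset_f.
by rewrite orbF; case: (sig j \in H); rewrite ?andbF.
Qed.

Lemma swap_del_diff D' D : valid_del M D' -> swap_del D' D :\: H = D :\: H.
Proof.
move=> vD'; have /eqP lift_diff : sig @: D' :\: H == set0 by rewrite setD_eq0 lift_valid_sub.
by rewrite /swap_del setDUl setDDl setUid lift_diff setU0.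
Qed.

Definition restrict_kept (D : {set 'I_(size G)}) : pred 'I_(size G) :=
  [pred k | onY k && (k \notin D :&: H)].

Lemma restrict_kept_inj D : valid_del G D -> {in restrict_kept D &, injective (fun k => hd k)}.
Proof.
move=> vD k1 k2 /andP[Y1 n1] /andP[Y2 n2] e12; apply/eqP; apply: contraT => n12.
have hM : hybrid_node M (hd k1).
  by rewrite hybrid_node_restrict (card_shared_head (S := fun k => onY k) n12 e12 Y1 Y2).

have H1 : k1 \in H by rewrite inE Y1 hM.
have H2 : k2 \in H by rewrite inE Y2 -e12 hM.
rewrite in_setI H1 andbT in n1; rewrite in_setI H2 andbT in n2.
by rewrite (kept_head_inj vD n1 n2 e12) eqxx in n12.
Qed.

Lemma restrict_kept_bridge D k :
  valid_del G D -> restrict_kept D k -> bridge (fun k => ug k) (restrict_kept D) k.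
Proof.
move=> vD Kk; apply: bridge_inj_head Kk (restrict_kept_inj vD) _ => /=.
have arc_k : arcG (tl k) (hd k) by apply/existsP; exists k; rewrite !eqxx.
apply: contra (arcG_acyclic arc_k); apply: connect_sub => u v /existsP[k' /and3P[_ tk' hk']].
by apply/connect1/existsP; exists k'; rewrite tk' hk'.
Qed.

Definition restrict_display_edges (D : {set 'I_(size G)}) : seq 'I_(size G) :=
  [seq display_index D j | j <- enum 'I_(size (display G D))
                         & `[< on_updown (display G D) Y j >]].

Lemma restrict_displayE D :
  restrict (display G D) Y = map (fun k => ug k) (restrict_display_edges D).
Proof. by rewrite /restrict -map_comp; apply: eq_map => j; rewrite /= edge_at_display. Qed.

Lemma restrict_display_edges_kept D :
  valid_del G D -> subpred (mem (restrict_display_edges D)) (restrict_kept D).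
Proof.
move=> vD k /mapP[j]; rewrite mem_filter mem_enum andbT => /asboolP[a [b [p [es]]]].
case=> aY bY ab ud jes ->; apply/andP; split.
  apply/asboolP; exists a, b, p, (map (display_index D) es); split=> //.
    exact: display_updown_path vD ud.
  exact: map_f.
by rewrite in_setI (negbTE (display_index_kept j)).
Qed.

Lemma has_split_display_restrict_del D a b c d :
  has_split (display M (restrict_del D)) a b c d =
  has_splitp (fun k => ug k) (restrict_kept D) a b c d.
Proof.
pose K := [seq sig j | j <- enum 'I_(size M) & j \notin restrict_del D].
have -> : display M (restrict_del D) = map (fun k => ug k) K.
  by rewrite /display /K -map_comp; apply: eq_map => j; rewrite /= edge_at_restrict.
rewrite has_split_map; last first.
  by rewrite map_inj_uniq ?filter_uniq -?enumT ?enum_uniq //; apply: restrict_index_inj.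
apply: eq_has_splitp => k; apply/mapP/idP => [[j] | /andP[Yk kK]].
  rewrite mem_filter mem_enum andbT in_restrict_del => jK ->; apply/andP; split => //.
  exact/asboolP/restrict_index_on_updown.
have [j Ej] := restrict_index_onto (asboolW Yk).
by exists j; rewrite // mem_filter mem_enum andbT in_restrict_del Ej.
Qed.

Lemma has_split_restrict_display D a b c d :
  valid_del G D -> a \in Y -> b \in Y -> c \in Y -> d \in Y ->
  has_split (restrict (display G D) Y) a b c d =
  has_split (display M (restrict_del D)) a b c d.
Proof.
move=> vD aY bY cY dY; set P := restrict_display_edges D.
have conn x y : x \in Y -> y \in Y -> connect (adjp (fun k => ug k) (mem P)) x y.
  move=> xY yY; rewrite -(eq_connect (adj_map _ _)) -restrict_displayE.
  exact: connect_restrict_display.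
rewrite has_split_display_restrict_del restrict_displayE has_split_map; last first.
  by rewrite map_inj_uniq ?filter_uniq -?enumT ?enum_uniq //; apply: display_index_inj.
symmetry; apply: has_splitp_sub; rewrite ?conn //.
  exact: restrict_display_edges_kept.
by move=> k; apply: restrict_kept_bridge.
Qed.

Definition del_fiber (D' : {set 'I_(size M)}) :=
  [set D : {set 'I_(size G)} | valid_del G D && (restrict_del D == D')].

Lemma card_del_fiber_le D1 D2 :
  valid_del M D1 -> valid_del M D2 -> #|del_fiber D1| <= #|del_fiber D2|.
Proof.
move=> vD1 vD2; rewrite -(@card_in_imset _ _ (swap_del D2) (del_fiber D1)).
  apply: subset_leq_card; apply/subsetP => D2' /imsetP[D]; rewrite inE => /andP[vD _] ->.
  by rewrite inE valid_swap_del // restrict_swap_del ?eqxx.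
move=> D D'; rewrite !inE => /andP[vD /eqP rD] /andP[vD' /eqP rD'] eq_swap.
rewrite -(setID D H) -(setID D' H) -!lift_restrict_del rD rD'.
by rewrite -(swap_del_diff D vD2) -(swap_del_diff D' vD2) eq_swap.
Qed.

Local Open Scope ring_scope.

Theorem rho_tilde_restrict a b c d :
  a \in Y -> b \in Y -> c \in Y -> d \in Y ->
  rho_tilde M a b c d = (mu G)%:R^-1 *
    \sum_(D : {set 'I_(size G)} | valid_del G D) rho (restrict (display G D) Y) a b c d.
Proof.
move=> aY bY cY dY; have [D0 vD0] := valid_del_exists G.
pose n := #|del_fiber (restrict_del D0)|.
have fiber_n D' : valid_del M D' -> #|del_fiber D'| = n.
  by move=> vD'; apply/eqP; rewrite eqn_leq !card_del_fiber_le // valid_restrict_del.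
have sum_fibers (F : {set 'I_(size M)} -> rat) :
    \sum_(D | valid_del G D) F (restrict_del D) = (\sum_(D' | valid_del M D') F D') *+ n.
  exact: sum_const_fibers (@valid_restrict_del) fiber_n.
have n_neq0 : n%:R != 0 :> rat.
  by rewrite pnatr_eq0 -lt0n; apply/card_gt0P; exists D0; rewrite inE vD0 eqxx.
have muM_neq0 : (mu M)%:R != 0 :> rat.
  rewrite pnatr_eq0 -lt0n; apply/card_gt0P; exists (restrict_del D0).
  by rewrite inE valid_restrict_del.
have muG : (mu G)%:R = (mu M)%:R * n%:R :> rat.
  have := sum_fibers (fun _ => 1); rewrite !sumr_const /mu !cardsE => ->.
  by rewrite mulr_natr.
rewrite (eq_bigr (fun D => rho (display M (restrict_del D)) a b c d)); last first.
  by move=> D vD; rewrite /rho has_split_restrict_display.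
rewrite (sum_fibers (fun D' => rho (display M D') a b c d)) muG /rho_tilde -mulr_natr.
by field; rewrite n_neq0 muM_neq0.
Qed.

End SemiDirected.

(** * The semi-directed network of a rooted network *)

Section RootedNetwork.
Variables (X V : finType) (R : seq (V * V)) (r : V) (lab : X -> V).
Hypothesis net : is_rooted_network R r lab.
Local Notation arcR := (Defs.arc R).

Let R_uniq : uniq R. Proof. by case: net => [[]]. Qed.
Let R_acyclic u v : (u, v) \in R -> ~~ connect arcR v u.
Proof. by case: net => [[_ ]] => /(_ u v). Qed.
Let indeg_root : indeg R r = 0. Proof. by case: net => _ []. Qed.
Let outdeg_root : outdeg R r = 2. Proof. by case: net => _ []. Qed.
Let degrees v : v != r ->
  [|| (indeg R v == 1) && (outdeg R v == 0), (indeg R v == 1) && (outdeg R v == 2)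
    | (indeg R v == 2) && (outdeg R v == 1)].
Proof. by case: net => _ _ /(_ v). Qed.
Let leafP v : (indeg R v == 1) && (outdeg R v == 0) <-> exists x, lab x = v.
Proof. by case: net => _ _ _ [_ /(_ v)]. Qed.

Local Notation hybrid v := (indeg R v == 2).

Definition root_children := [seq e.2 | e <- R & e.1 == r].
Definition child1 := nth r root_children 0.
Definition child2 := nth r root_children 1.

Definition merged_arc : V * V :=
  if hybrid child2 then (child1, child2)
  else if hybrid child1 then (child2, child1) else (child1, child2).
Local Notation src := merged_arc.1.
Local Notation dst := merged_arc.2.

Definition sd_arcs := rcons [seq e <- R | e.1 != r] merged_arc.
Definition sd_edge (e : V * V) : medge V := (e.1, e.2, hybrid e.2).

Lemma sd_netE : sd_net R r = map sd_edge sd_arcs.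
Proof.
rewrite /sd_net /sd_arcs map_rcons; congr rcons.
rewrite /merged_arc /sd_edge /child1 /child2 /root_children /=.
case: ifP => h2 /=; first by rewrite h2.
by case: ifP => h1 /=; rewrite ?h1 ?h2.
Qed.

Lemma indeg_le2 v : indeg R v <= 2.
Proof.
have [->|/degrees] := eqVneq v r; first by rewrite indeg_root.
by case/or3P => /andP[/eqP -> _].
Qed.

Lemma parent_exists v : v != r -> exists p, (p, v) \in R.
Proof.
move=> vr; have : 0 < indeg R v by case/or3P: (degrees vr) => /andP[/eqP -> _].
by rewrite /indeg -has_count => /hasP[[p w] pw /eqP /= wv]; exists p; rewrite -wv.
Qed.

Lemma root_no_parent u : (u, r) \notin R.
Proof.
apply/negP => ur; move: indeg_root; rewrite /indeg => /eqP.
by rewrite -leqn0 leqNgt -has_count; case/negP; apply/hasP; exists (u, r).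
Qed.

Lemma root_arcE y : ((r, y) \in R) = (y \in root_children).
Proof.
apply/idP/mapP => [ry|[[u w]]]; first by exists (r, y); rewrite // mem_filter eqxx.
by rewrite mem_filter /= => /andP[/eqP -> ?] ->.
Qed.

Lemma root_childrenE : root_children = [:: child1; child2].
Proof.
have : size root_children = 2 by rewrite size_map size_filter; apply: outdeg_root.
by rewrite /child1 /child2; case: root_children => [|? [|? []]].
Qed.

Lemma child1_neq_child2 : child1 != child2.
Proof.
have : uniq root_children.
  rewrite map_inj_in_uniq ?filter_uniq ?R_uniq // => -[a b] [a' b'].
  by rewrite !mem_filter /= => /andP[/eqP -> _] /andP[/eqP -> _] ->.
by rewrite root_childrenE /= inE andbT.
Qed.

Lemma root_child1 : (r, child1) \in R.
Proof. by rewrite root_arcE root_childrenE inE eqxx. Qed.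

Lemma root_child2 : (r, child2) \in R.
Proof. by rewrite root_arcE root_childrenE !inE eqxx orbT. Qed.

Lemma child_neq_root y : (r, y) \in R -> y != r.
Proof. by apply: contraTneq => ->; apply: root_no_parent. Qed.

Lemma reachable_from_root v : connect arcR r v.
Proof.
elim/(acyclic_ind R_acyclic): v => v IH.
have [->|/parent_exists[p pv]] := eqVneq v r; first exact: connect0.
by apply: connect_trans (IH p pv) (connect1 _).
Qed.

Lemma hybrid_other_parent v : hybrid v -> (r, v) \in R -> exists2 p, (p, v) \in R & p != r.
Proof.
move=> hv rv; have [/existsP[p /andP[pv pr]]|] := boolP [exists p, ((p, v) \in R) && (p != r)].
  by exists p.
move/existsPn => only_r; move: hv; rewrite /indeg (@eq_in_count _ _ (pred1 (r, v))).
  by rewrite count_uniq_mem ?R_uniq // rv.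
move=> [a b] ab /=; apply/eqP/eqP => [Eb|[_ ->]] //.
by have := only_r a; rewrite -Eb ab /= negbK => /eqP ->.
Qed.

Lemma below_root_child p : p != r ->
  exists2 y, y \in root_children & connect arcR y p.
Proof.
move=> pr; case/connect_first: (reachable_from_root p); first by rewrite eq_sym.
by move=> y ry yp; exists y; rewrite -?root_arcE.
Qed.

(* Otherwise the second parent of each child lies below the other child. *)
Lemma root_children_not_both_hybrid : ~~ (hybrid child1 && hybrid child2).
Proof.
apply/negP => /andP[h1 h2].
have [p1 p1c1 p1r] := hybrid_other_parent h1 root_child1.
have [p2 p2c2 p2r] := hybrid_other_parent h2 root_child2.
have c2c1 : connect arcR child2 child1.
  have [y] := below_root_child p1r; rewrite root_childrenE !inE => /orP[]/eqP -> yp1.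
    by move: (R_acyclic p1c1); rewrite yp1.
  exact: connect_trans yp1 (connect1 _).
have c1p2 : connect arcR child1 p2.
  have [y] := below_root_child p2r; rewrite root_childrenE !inE => /orP[]/eqP -> yp2 //.
  by move: (R_acyclic p2c2); rewrite yp2.
by move: (R_acyclic p2c2); rewrite (connect_trans c2c1 c1p2).
Qed.

Lemma merged_arcE : merged_arc = (child1, child2) \/ merged_arc = (child2, child1).
Proof. by rewrite /merged_arc; case: ifP => _; [left | case: ifP => _; [right | left]]. Qed.

Lemma root_src : (r, src) \in R.
Proof. by case: merged_arcE => ->; rewrite ?root_child1 ?root_child2. Qed.

Lemma root_dst : (r, dst) \in R.
Proof. by case: merged_arcE => ->; rewrite ?root_child1 ?root_child2. Qed.

Lemma src_neq_dst : src != dst.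
Proof.
by case: merged_arcE => -> /=; rewrite ?child1_neq_child2 // eq_sym child1_neq_child2.
Qed.

Lemma src_not_hybrid : ~~ hybrid src.
Proof.
rewrite /merged_arc; case: ifP => h2 /=.
  by move: root_children_not_both_hybrid; rewrite h2 andbT.
by case: ifP => h1 /=; rewrite ?h1 ?h2.
Qed.

Lemma src_parent u : (u, src) \in R -> u = r.
Proof.
move=> us; apply/eqP; apply: contraT => ur.
have src_indeg1 : indeg R src = 1.
  move: src_not_hybrid.
  by case/or3P: (degrees (child_neq_root root_src)) => /andP[/eqP -> _].
have := @two_le_count _ (fun e => e.2 == src) R _ _ _ us root_src (eqxx _) (eqxx _).
by rewrite -/(indeg R src) src_indeg1; apply; rewrite xpair_eqE negb_and ur.
Qed.

Lemma sd_arcsP u v : (u, v) \in sd_arcs -> (u, v) \in R \/ (u, v) = merged_arc.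
Proof.
rewrite mem_rcons inE => /orP[/eqP -> | ]; first by right.
by rewrite mem_filter => /andP[_ ->]; left.
Qed.

Lemma sd_arcs_tail_neq_root e : e \in sd_arcs -> e.1 != r.
Proof.
rewrite mem_rcons inE => /orP[/eqP -> | ]; first exact: child_neq_root root_src.
by rewrite mem_filter => /andP[].
Qed.

Lemma sd_arcs_no_src u : (u, src) \notin sd_arcs.
Proof.
rewrite mem_rcons inE negb_or mem_filter /= negb_and negbK; apply/andP; split.
  by apply: contra src_neq_dst => /eqP/(congr1 snd) /= ->.
apply/orP; have [/src_parent -> | nR] := boolP ((u, src) \in R); [by left | by right].
Qed.

Lemma sd_connect x y : connect (Defs.arc sd_arcs) x y ->
  connect arcR x y \/ (x = src /\ connect arcR dst y).
Proof.
case/connectP=> s + ->; elim: s x => [|w s IH] x /=; first by left; apply: connect0.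
case/andP=> xw /IH[wR | [w_src _]]; last by case/negP: (sd_arcs_no_src x); rewrite -w_src.
case/sd_arcsP: xw => [xw | xw_m]; first by left; apply: connect_trans (connect1 xw) wR.
by right; rewrite -xw_m.
Qed.

Lemma sd_arcs_acyclic u v : (u, v) \in sd_arcs -> ~~ connect (Defs.arc sd_arcs) v u.
Proof.
move=> uv; apply/negP => /sd_connect[vu | [v_src _]]; last first.
  by case/negP: (sd_arcs_no_src u); rewrite -v_src.
case/sd_arcsP: uv => [uv | uv_m]; first by move: (R_acyclic uv); rewrite vu.
move: vu; rewrite -[u]/((u, v).1) -[v]/((u, v).2) uv_m => dst_src.
(* [src] has the root as its only parent, and the root has no parent. *)
have [z dst_z /src_parent z_r] := connect_last dst_src (contra_neq esym src_neq_dst).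
rewrite z_r in dst_z; have [z' _ z'_r] := connect_last dst_z (child_neq_root root_dst).
by case/negP: (root_no_parent z').
Qed.

Lemma sd_arcs_sourceless v : v != r -> (forall u, (u, v) \notin sd_arcs) -> v = src.
Proof.
move=> vr no_in; have [p pv] := parent_exists vr.
have p_r : p = r.
  apply/eqP; apply: contraT => pr; case/negP: (no_in p).
  by rewrite mem_rcons inE mem_filter /= pr pv orbT.
have v_dst : v != dst.
  by apply: contraNneq (no_in src) => ->; rewrite mem_rcons inE -surjective_pairing eqxx.
move: pv v_dst; rewrite p_r root_arcE root_childrenE !inE.
by case: merged_arcE => -> /= /orP[] /eqP -> //; rewrite eqxx.
Qed.

Lemma indeg_sd_arcs v : indeg sd_arcs v <= indeg R v.
Proof.
rewrite /indeg /sd_arcs -cats1 count_cat /= addn0.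
rewrite [X in _ <= X](count_split _ (fun e : V * V => e.1 != r)) leq_add2l.
case: eqP => // <-; rewrite -has_count; apply/hasP; exists (r, dst) => //.
by rewrite mem_filter /= negbK eqxx root_dst.
Qed.

Lemma lab_neq_root x : lab x != r.
Proof.
apply/eqP => lab_r; have /leafP : exists y, lab y = lab x by exists x.
by rewrite lab_r indeg_root.
Qed.

Local Notation G := (sd_net R r).

Lemma size_sd_net : size G = size sd_arcs.
Proof. by rewrite sd_netE size_map. Qed.

Lemma edge_at_sd_net k : edge_at G k = sd_edge (nth (r, r) sd_arcs k).
Proof.
rewrite /edge_at (tnth_nth (sd_edge (r, r))) /=.
have := ltn_ord k; move: (nat_of_ord k) => j; rewrite sd_netE size_map => j_lt.
by rewrite (nth_map (r, r)).
Qed.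

Lemma sd_arc_mem (k : 'I_(size G)) : nth (r, r) sd_arcs k \in sd_arcs.
Proof. by rewrite mem_nth // -size_sd_net. Qed.

Lemma card_in_edges_sd_net v :
  #|[set k : 'I_(size G) | (edge_at G k).1.2 == v]| = indeg sd_arcs v.
Proof. by rewrite -(count_edges G (fun e => e.1.2 == v)) sd_netE count_map. Qed.

Lemma sd_net_in_edges_le2 v : #|[set k : 'I_(size G) | (edge_at G k).1.2 == v]| <= 2.
Proof. by rewrite card_in_edges_sd_net (leq_trans (indeg_sd_arcs v)) ?indeg_le2. Qed.

Lemma sd_net_shared_head_dir k1 k2 :
  k1 != k2 -> (edge_at G k1).1.2 = (edge_at G k2).1.2 -> (edge_at G k1).2.
Proof.
move=> n12 e12; have : 2 <= indeg sd_arcs (edge_at G k1).1.2.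
  rewrite -card_in_edges_sd_net; have <- : #|[set k1; k2]| = 2 by rewrite cards2 n12.
  apply: subset_leq_card.
  by apply/subsetP => k; rewrite !inE => /orP[]/eqP->; rewrite ?e12.
move/leq_trans/(_ (indeg_sd_arcs _)); rewrite edge_at_sd_net /= => two_le.
by rewrite eqn_leq indeg_le2.
Qed.

Lemma sd_arc_of_edge u v : arcp (edge_at G) predT u v -> (u, v) \in sd_arcs.
Proof.
case/existsP=> k /and3P[_ /eqP <- /eqP <-].
by rewrite edge_at_sd_net /= -surjective_pairing sd_arc_mem.
Qed.

Lemma sd_net_acyclic u v :
  arcp (edge_at G) predT u v -> ~~ connect (arcp (edge_at G) predT) v u.
Proof.
move/sd_arc_of_edge/sd_arcs_acyclic; apply: contra; apply: connect_sub => x y.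
by move/sd_arc_of_edge => xy; apply: connect1.
Qed.

Lemma sd_net_tail_neq_root k : (edge_at G k).1.1 != r.
Proof. by rewrite edge_at_sd_net; apply: sd_arcs_tail_neq_root (sd_arc_mem k). Qed.

Lemma sd_net_sourceless v :
  v != r -> (forall k, (edge_at G k).1.2 != v) -> v = src.
Proof.
move=> vr no_in; apply: (sd_arcs_sourceless vr) => u; apply/negP => uv.
have uv_idx : index (u, v) sd_arcs < size G by rewrite size_sd_net index_mem.
by move: (no_in (Ordinal uv_idx)); rewrite edge_at_sd_net /= nth_index // eqxx.
Qed.

End RootedNetwork.

Local Open Scope ring_scope.

Theorem lemma3p2 (X V : finType) (R : seq (V * V)) (r : V) (lab : X -> V)
    (x y z w : X) :
  is_rooted_network R r lab -> (4 <= #|X|)%N -> uniq [:: x; y; z; w] ->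
  let N := sd_net R r in
  let Q := [:: lab x; lab y; lab z; lab w] in
  rho_tilde (restrict N Q) (lab x) (lab y) (lab z) (lab w) =
  (mu N)%:R^-1 *
  \sum_(D : {set 'I_(size N)} | valid_del N D)
     rho (restrict (display N D) Q) (lab x) (lab y) (lab z) (lab w).
Proof.
(* The identity holds for any four leaves, distinct or not. *)
move=> net _ _ N Q.
apply: (rho_tilde_restrict (sd_net_in_edges_le2 net) (sd_net_shared_head_dir net)
  (sd_net_acyclic net) (sd_net_tail_neq_root net) (sd_net_sourceless net));
  rewrite ?inE ?eqxx ?orbT //.
by rewrite !negb_or !(eq_sym r) !(lab_neq_root net).
Qed.
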